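(* Let $k$ be a field of characteristic $p>0$ and $A=k[x_1,\dots,x_r]/(x_1^p,\dots,x_r^p)$ with the Lie Hopf structure $\Delta_{\mathrm{Lie}}$. Then the homomorphism $\Phi_{\Delta_{\mathrm{Lie}}}\colon\operatorname{Ext}^*_A(k,k)\to\operatorname{Ext}^*_{A^e}(A,A)$ satisfies \[ \Phi_{\Delta_{\mathrm{Lie}}}(\eta_i)=\delta_i\quad\text{and}\quad\Phi_{\Delta_{\mathrm{Lie}}}(\zeta_i)=\chi_i\qquad(i=1,\dots,r). \]
   Context: The Lie Hopf structure (restricted enveloping algebra of the abelian restricted Lie algebra $k^r$ with trivial $p$-power map): $\Delta_{\mathrm{Lie}}(x_i)=x_i\otimes1+1\otimes x_i$, antipode $\sigma_{\mathrm{Lie}}(x_i)=-x_i$. $A^e=A\otimes_kA^{op}$; $\Phi_\Delta\colon\operatorname{Ext}^*_A(k,k)\to\operatorname{Ext}^*_{A^e}(A,A)$ is induced by the functor $X\mapsto X\otimes_kA$ from $A$-modules to $A^e$-modules with action $(\alpha\otimes\beta)(x\otimes a)=\sum_{(\alpha)}\alpha_1x\otimes\alpha_2a\beta$ (exact, preserves projectives, sends $k$ to $A$; $\Phi_\Delta$ applies it to a projective resolution of $k$ and to cocycles). Resolutions and classes: for $A_i=k[x_i]/(x_i^p)$, let $P^{(i)}_*$ be $\cdots\to A_i\xrightarrow{x_i}A_i\xrightarrow{x_i^{p-1}}A_i\xrightarrow{x_i}A_i\to0$ augmented to $k$; $P_*=P^{(1)}_*\otimes_k\cdots\otimes_kP^{(r)}_*$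 resolves $k$ over $A$, with summands $P_{j_1,\dots,j_r}\cong A$. $\hat\eta_i$ (resp. $\hat\zeta_i$) is the cochain $P_*\to k$ equal to the augmentation on $P_{j_1,\dots,j_r}$ with $j_i=1$ (resp. $2$), $j_\ell=0$ for $\ell\ne i$, zero elsewhere; $\eta_i,\zeta_i$ are their classes in $\operatorname{Ext}^*_A(k,k)$. With $A_i^e=k[y_i,z_i]/(y_i^p,z_i^p)$, $y_i=x_i\otimes1$, $z_i=1\otimes x_i$, $Q^{(i)}_*$ is $\cdots\to A_i^e\xrightarrow{y_i-z_i}A_i^e\xrightarrow{(y_i-z_i)^{p-1}}A_i^e\xrightarrow{y_i-z_i}A_i^e\to0$ augmented by multiplication to $A_i$; $Q_*=\bigotimes_i Q^{(i)}_*$ resolves $A$ over $A^e$ with summands $Q_{j_1,\dots,j_r}\cong A^e$. $\hat\delta_i$ (resp. $\hat\chi_i$) is the cochain $Q_*\to A$ equal to multiplication $A^e\to A$ on $Q_{j_1,\dots,j_r}$ with $j_i=1$ (resp. $2$), $j_\ell=0$ for $\ell\ne i$, zero elsewhere; $\delta_i,\chi_i$ are their classes in $\operatorname{Ext}^*_{A^e}(A,A)$. *)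

From HB Require Import structures.
From mathcomp Require Import all_boot all_order all_algebra.
Set Implicit Arguments. Unset Strict Implicit. Unset Printing Implicit Defensive.
Import GRing.Theory.
Local Open Scope ring_scope.

Notation mono p r := {ffun 'I_r -> 'I_p}.
(* an element sum_m f(m) x^m of A *)
Notation Aelt k p r := {ffun mono p r -> GRing.Field.sort k}.
(* an element sum_{a,b} c(a,b) x^a (x) x^b of A (x)_k A  (used both for
   A^e = A (x) A^op (= A (x) A since A is commutative) and for P_j (x) A) *)
Notation AAelt k p r := {ffun (mono p r * mono p r)%type -> GRing.Field.sort k}.

Definition idx (r : nat) := 'I_r -> nat.
Definition deg (r : nat) (j : idx r) : nat := (\sum_(l < r) j l)%N.
Definition ei (r : nat) (i : 'I_r) (n : nat) : idx r :=
  fun l => if l == i then n else 0%N.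
Definition decr (r : nat) (j : idx r) (i : 'I_r) : idx r :=
  fun l => if l == i then (j l).-1 else j l.
Definition incr (r : nat) (j : idx r) (i : 'I_r) : idx r :=
  fun l => if l == i then (j l).+1 else j l.
Definition idx_eqb (r : nat) (j j' : idx r) : bool := [forall l, j l == j' l].
Definition idx_zero (r : nat) : idx r := fun _ => 0%N.
Arguments idx_zero : clear implicits.

Section Alg.
Variables (k : fieldType) (p r : nat).
Local Notation A := (Aelt k p r).
Local Notation AA := (AAelt k p r).
Local Notation mono := {ffun 'I_r -> 'I_p}.

Definition fsc (T : finType) (c : k) (f : {ffun T -> k}) : {ffun T -> k} :=
  [ffun t => c * f t].

(* x^e for an arbitrary exponent vector e (zero if some e_l >= p, as x_l^p = 0) *)
Definition xpow (e : idx r) : A :=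
  [ffun m : mono => if [forall l, (m l : nat) == e l] then 1 else 0].
Definition monoA (m : mono) : A := [ffun m' => (m' == m)%:R].
Definition oneA : A := xpow (idx_zero r).
Definition xvar (i : 'I_r) (n : nat) : A := xpow (ei i n).

Definition addm (a b m : mono) : bool := [forall l, (a l : nat) + b l == m l].
Definition mulA (f g : A) : A :=
  [ffun m => \sum_(a : mono) \sum_(b : mono | addm a b m) f a * g b].
Definition epsA (f : A) : k := \sum_(m : mono | [forall l, (m l : nat) == 0%N]) f m.

Definition tens (f g : A) : AA := [ffun ab => f ab.1 * g ab.2].
Definition oneAA : AA := tens oneA oneA.
Definition mulAA (c d : AA) : AA :=
  [ffun m => \sum_(a : mono * mono) \sum_(b : mono * mono |
        addm a.1 b.1 m.1 && addm a.2 b.2 m.2) c a * d b].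
Definition powAA (c : AA) (n : nat) : AA := iter n (mulAA c) oneAA.

(* y_i - z_i = x_i (x) 1 - 1 (x) x_i in A^e *)
Definition yz (i : 'I_r) : AA := tens (xvar i 1) oneA - tens oneA (xvar i 1).

(* Lie coproduct on monomials: Delta(x^m) = prod_l (x_l (x) 1 + 1 (x) x_l)^{m_l},
   i.e. the algebra map determined by Delta(x_i) = x_i (x) 1 + 1 (x) x_i *)
Definition DeltaM (m : mono) : AA :=
  \big[mulAA/oneAA]_(l < r) powAA (tens (xvar l 1) oneA + tens oneA (xvar l 1)) (m l).

Definition actA (c : AA) (a : A) : A :=
  \sum_(ab : mono * mono) fsc (c ab) (mulA (mulA (monoA ab.1) a) (monoA ab.2)).
(* action of A^e on X (x) A (for X = P_j = A):
   (alpha (x) beta)(x (x) a) = sum alpha_1 x (x) alpha_2 a beta *)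
Definition actXA (c : AA) (v : AA) : AA :=
  \sum_(ab : mono * mono) fsc (c ab) (mulAA (mulAA (DeltaM ab.1) v) (tens oneA (monoA ab.2))).
(* eps (x) id : P_0 (x) A = A (x) A -> k (x) A = A *)
Definition epsAA1 (c : AA) : A :=
  [ffun m => \sum_(a : mono | [forall l, (a l : nat) == 0%N]) c (a, m)].

(* exponent of the i-th differential out of homological degree n >= 1:
   x_i if n odd, x_i^{p-1} if n even *)
Definition dexp (n : nat) : nat := if odd n then 1%N else p.-1.
(* Koszul sign for the tensor product of complexes *)
Definition ksgn (j : idx r) (i : 'I_r) : k :=
  (-1) ^+ (\sum_(l < r | (l < i)%N) j l)%N.

(* Elements of P_* (x) A: v j = component in P_j (x) A = A (x) A.
   Differential d (x) id, with d(e_j) = sum_i ksgn j i * x_i^{dexp j_i} e_{j - e_i}. *)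
Definition dPA (v : idx r -> AA) : idx r -> AA :=
  fun j => \sum_(i < r) fsc (ksgn (incr j i) i)
      (mulAA (tens (xvar i (dexp (incr j i i))) oneA) (v (incr j i))).

(* A^e-linear maps F : Q_* -> P_* (x) A, given by the images F j of the
   generators e_j of the summands Q_j = A^e; a comparison map is a chain map
   of degree 0 lifting id_A (Q_* -> A multiplication, P_*(x)A -> k(x)A = A). *)
Definition comparison (F : idx r -> idx r -> AA) : Prop :=
  [/\ (forall j j', deg j' <> deg j -> F j j' = 0),
      epsAA1 (F (idx_zero r) (idx_zero r)) = oneA
    & forall j, (0 < deg j)%N -> forall j',
        dPA (F j) j' =
        \sum_(i < r | (0 < j i)%N)
            fsc (ksgn j i) (actXA (powAA (yz i) (dexp (j i))) (F (decr j i) j'))].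

(* A^e-linear cochains Q_n -> A are given by their values g j on generators e_j
   (|j| = n).  Coboundary of g: (dg)(e_j) = g(d e_j). *)
Definition dQ (g : idx r -> A) : idx r -> A :=
  fun j => \sum_(i < r | (0 < j i)%N)
      fsc (ksgn j i) (actA (powAA (yz i) (dexp (j i))) (g (decr j i))).
Definition cohomologous (n : nat) (c1 c2 : idx r -> A) : Prop :=
  exists g : idx r -> A, forall j, deg j = n -> c1 j = c2 j + dQ g j.

(* The cochains hat-delta_i (n = 1), hat-chi_i (n = 2) on Q_*:
   multiplication A^e -> A on Q_{n e_i}, zero elsewhere. *)
Definition hatQ (i : 'I_r) (n : nat) : idx r -> A :=
  fun j => if idx_eqb j (ei i n) then oneA else 0.
(* The cochains hat-eta_i (n = 1), hat-zeta_i (n = 2) on P_*: augmentation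
   on P_{n e_i}, zero elsewhere; given by their values on generators. *)
Definition hatP (i : 'I_r) (n : nat) : idx r -> k :=
  fun j => if idx_eqb j (ei i n) then 1 else 0.

(* Phi_Delta on cochains: c : P_n -> k  |->  c (x) A : P_n (x) A -> k (x) A = A,
   (x (x) a) in P_j (x) A  |->  c_j eps(x) a. *)
Definition PhiCochain (n : nat) (c : idx r -> k) (v : idx r -> AA) : A :=
  \sum_(jj : {ffun 'I_r -> 'I_n.+1} | deg (fun l => (jj l : nat)) == n)
     fsc (c (fun l => (jj l : nat))) (epsAA1 (v (fun l => (jj l : nat)))).

(* The cocycle Phi(c) transported to the resolution Q_* along F. *)
Definition PhiPull (F : idx r -> idx r -> AA) (n : nat) (c : idx r -> k) : idx r -> A :=
  fun j => PhiCochain n c (F j).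

End Alg.

(* With the Lie coproduct, [Delta(x_i) - 1 (x) x_i = x_i (x) 1], so [y_i - z_i] acts on
   [P_j (x) A] as multiplication by [x_i (x) 1]; hence the differentials of [Q_*] and
   [P_* (x) A] match and [e_j |-> e_j (x) 1] is a comparison map.  For an arbitrary comparison
   map [F], the chain-map identity read at the coefficient of [x_i (x) x^b] (degree 1) or of
   [x_i^(p-1) (x) x^b] (degree 2) shows that [(eps (x) 1) F_j(e_(n e_i))] is [1] for
   [j = n e_i] and [0] otherwise, so the pulled-back cocycles are [hat-delta_i] and
   [hat-chi_i] on the nose. *)

From Pilot Require Import Defs.
From HB Require Import structures.
From mathcomp Require Import all_boot all_order all_algebra ring.
From Stdlib Require Import FunctionalExtensionality.
Set Implicit Arguments. Unset Strict Implicit. Unset Printing Implicit Defensive.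
Import GRing.Theory.
Local Open Scope ring_scope.

Section MultiIndices.
Variable r : nat.
Implicit Types (j : idx r) (i l : 'I_r).

Lemma idx_eqbP j j' : reflect (j = j') (idx_eqb j j').
Proof.
apply: (iffP forallP) => [H|->] //.
by apply: functional_extensionality => l; apply/eqP.
Qed.

Lemma deg_split j i : deg j = (j i + \sum_(l | l != i) j l)%N.
Proof. by rewrite /deg (bigD1 i). Qed.

Lemma leq_idx_deg j i : (j i <= deg j)%N.
Proof. by rewrite (deg_split j i) leq_addr. Qed.

Lemma leq_idx_deg_sub j i l : l != i -> (j l <= deg j - j i)%N.
Proof. by move=> Hl; rewrite (deg_split j i) addKn (bigD1 l) //= leq_addr. Qed.

Lemma deg_ei i n : deg (ei i n) = n.
Proof. by rewrite (deg_split _ i) big1 ?addn0 /ei ?eqxx // => l /negbTE ->. Qed.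

Lemma deg_decr j i : (0 < j i)%N -> deg j = (deg (decr j i)).+1.
Proof.
move=> ji_gt0; rewrite (deg_split j i) (deg_split (decr j i) i) /decr eqxx.
by rewrite -addSn prednK //; congr addn; apply: eq_bigr => l /negbTE ->.
Qed.

Lemma idx_eq_ei j i : j i = deg j -> j = ei i (deg j).
Proof.
move=> ji; apply: functional_extensionality => l; rewrite /ei.
case: eqP => [->//|/eqP Hl].
by have := leq_idx_deg_sub j Hl; rewrite ji subnn leqn0 => /eqP.
Qed.

Lemma deg1_idx_eq j i : deg j = 1%N -> (0 < j i)%N -> j = ei i 1.
Proof.
move=> Hd ji_gt0; rewrite -Hd; apply: idx_eq_ei; apply/eqP.
by rewrite eqn_leq leq_idx_deg Hd ji_gt0.
Qed.

Lemma incr_decr j i : (0 < j i)%N -> incr (decr j i) i = j.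
Proof.
move=> ji_gt0; apply: functional_extensionality => l; rewrite /incr /decr.
by case: eqP => [->|//]; rewrite prednK.
Qed.

Lemma decr_incr j i : decr (incr j i) i = j.
Proof. by apply: functional_extensionality => l; rewrite /incr /decr; case: eqP => [->|]. Qed.

Lemma incr_ei i n : incr (ei i n) i = ei i n.+1.
Proof. by apply: functional_extensionality => l; rewrite /incr /ei; case: eqP. Qed.

Lemma decr_ei i n : decr (ei i n.+1) i = ei i n.
Proof. by apply: functional_extensionality => l; rewrite /decr /ei; case: eqP. Qed.

Lemma ei0 i : ei i 0 = idx_zero r.
Proof. by apply: functional_extensionality => l; rewrite /ei; case: eqP. Qed.

Lemma ei_id i n : ei i n i = n.
Proof. by rewrite /ei eqxx. Qed.

Lemma incr0 i : incr (idx_zero r) i = ei i 1.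
Proof. by apply: functional_extensionality => l; rewrite /incr /ei; case: eqP. Qed.

Lemma ksgn_ei (k : fieldType) i n : ksgn k (ei i n) i = 1.
Proof.
rewrite /ksgn big1 ?expr0 // => l l_lt_i; rewrite /ei ifN //.
by apply: contraTneq l_lt_i => ->; rewrite ltnn.
Qed.

Lemma idx_eqb_ei_deg j i : idx_eqb j (ei i (deg j)) = (j i == deg j).
Proof.
by apply/idx_eqbP/eqP => [j_ei|/idx_eq_ei //]; rewrite {1}j_ei ei_id.
Qed.

End MultiIndices.

Section TruncatedMonomials.
Variables (r p' : nat).
Local Notation p := p'.+1.
Local Notation mono := {ffun 'I_r -> 'I_p}.
Implicit Types (e f : idx r) (a b c m : mono).

(* [None] when some exponent reaches [p], i.e. when [x^e = 0] in [A]. *)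
Definition mono_of e : option mono :=
  if [forall l, e l < p]%N then Some [ffun l => inord (e l)] else None.

Lemma mono_ofP e m : (mono_of e == Some m) = [forall l, (m l : nat) == e l].
Proof.
rewrite /mono_of; case: ifP => [/forallP e_lt|/negbT].
  apply/eqP/forallP => [[<-] l|m_e]; first by rewrite ffunE inordK.
  by congr Some; apply/ffunP=> l; apply/val_inj; rewrite ffunE /= (eqP (m_e l)) inordK.
rewrite negb_forall => /existsP [l Hl]; symmetry; apply/negbTE.
by apply: contra Hl => /forallP /(_ l) /eqP <-.
Qed.

Lemma mono_of_val m : mono_of (fun l => m l) = Some m.
Proof. by apply/eqP; rewrite mono_ofP; apply/forallP. Qed.

Lemma mono_of_Some e m : mono_of e = Some m -> e = (fun l => m l).
Proof.
move/eqP; rewrite mono_ofP => /forallP m_e.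
by apply: functional_extensionality => l; rewrite (eqP (m_e l)).
Qed.

Lemma mono_of_None e f :
  (forall l, e l <= f l)%N -> mono_of e = None -> mono_of f = None.
Proof.
rewrite /mono_of => e_le_f; case: ifP => // /negbT; rewrite negb_forall.
case/existsP=> l; rewrite -leqNgt => le_p _; case: ifP => // /forallP /(_ l).
by rewrite ltnNge (leq_trans le_p (e_le_f l)).
Qed.

Definition mono0 : mono := [ffun => ord0].

Lemma mono_of0 : mono_of (idx_zero r) = Some mono0.
Proof.
by rewrite -mono_of_val; congr mono_of; apply: functional_extensionality => l; rewrite ffunE.
Qed.

Definition mono_add a b : option mono := mono_of (fun l => (a l + b l)%N).

Lemma addmE a b m : addm a b m = (mono_add a b == Some m).
Proof. by rewrite /mono_add mono_ofP; apply/forallP/forallP => H l; rewrite eq_sym H. Qed.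

Lemma mono_add_val a b c : mono_add a b = Some c -> forall l, (c l : nat) = (a l + b l)%N.
Proof. by move=> /mono_of_Some E l; rewrite (congr1 (fun f => f l) E). Qed.

Lemma mono_addC a b : mono_add a b = mono_add b a.
Proof. by congr mono_of; apply: functional_extensionality => l; rewrite addnC. Qed.

Lemma mono_add0 b : mono_add mono0 b = Some b.
Proof.
by rewrite -mono_of_val; congr mono_of; apply: functional_extensionality => l; rewrite ffunE.
Qed.

Lemma obind_mono_addr e b :
  obind (mono_add^~ b) (mono_of e) = mono_of (fun l => (e l + b l)%N).
Proof.
case E: (mono_of e) => [a|] /=; first by rewrite /mono_add (mono_of_Some E).
by symmetry; apply: mono_of_None E => l; apply: leq_addr.
Qed.

Lemma mono_addA a b c :
  obind (mono_add^~ c) (mono_add a b) = obind (mono_add a) (mono_add b c).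
Proof.
have -> : obind (mono_add a) (mono_add b c) = obind (mono_add^~ a) (mono_add b c).
  by case: (mono_add b c) => //= x; rewrite mono_addC.
rewrite !obind_mono_addr.
by congr mono_of; apply: functional_extensionality => l; rewrite [RHS]addnC addnA.
Qed.

Lemma mono_add_inj a b b' c : mono_add a b = Some c -> mono_add a b' = Some c -> b = b'.
Proof.
move=> Hb Hb'; apply/ffunP=> l; apply/val_inj/eqP.
by rewrite -(eqn_add2l (a l)) -(mono_add_val Hb) -(mono_add_val Hb').
Qed.

Definition opair (T : Type) (o1 o2 : option T) : option (T * T) :=
  if o1 is Some c1 then omap (pair c1) o2 else None.

Lemma obind_opair (T : Type) (f g : T -> option T) o1 o2 :
  obind (fun x => opair (f x.1) (g x.2)) (opair o1 o2) = opair (obind f o1) (obind g o2).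
Proof. by case: o1 => [a|]; case: o2 => [b|] //=; case: (f a). Qed.

Implicit Types (x y z w : mono * mono).

Definition mono2_add x y := opair (mono_add x.1 y.1) (mono_add x.2 y.2).

Lemma mono2_addC x y : mono2_add x y = mono2_add y x.
Proof. by rewrite /mono2_add mono_addC [mono_add x.2 _]mono_addC. Qed.

Lemma mono2_addA x y z :
  obind (mono2_add^~ z) (mono2_add x y) = obind (mono2_add x) (mono2_add y z).
Proof.
rewrite /mono2_add (obind_opair (mono_add^~ z.1) (mono_add^~ z.2)).
by rewrite (obind_opair (mono_add x.1) (mono_add x.2)) !mono_addA.
Qed.

Lemma mono2_add0 y : mono2_add (mono0, mono0) y = Some y.
Proof. by rewrite /mono2_add /= !mono_add0; case: y. Qed.

Lemma mono2_add_inj x y y' w : mono2_add x y = Some w -> mono2_add x y' = Some w -> y = y'.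
Proof.
rewrite /mono2_add.
case E1: (mono_add x.1 y.1) => [c1|] //; case E2: (mono_add x.2 y.2) => [c2|] //= [<-].
case E1': (mono_add x.1 y'.1) => [d1|] //; case E2': (mono_add x.2 y'.2) => [d2|] //= [e1 e2].
subst d1 d2; case: y y' E1 E2 E1' E2' => y1 y2 [y1' y2'] /= E1 E2 E1' E2'.
by rewrite (mono_add_inj E1 E1') (mono_add_inj E2 E2').
Qed.

End TruncatedMonomials.

Section EnvelopingRing.
Variables (k : fieldType) (r p' : nat).
Local Notation p := p'.+1.
Local Notation mono := {ffun 'I_r -> 'I_p}.
Local Notation AA := (AAelt k p r).
Implicit Types (c d g : AA) (x y z m : mono * mono) (i l : 'I_r).

Definition indic (o : option (mono * mono)) m : k := (o == Some m)%:R.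

Lemma sum_indic o (G : mono * mono -> k) : \sum_x indic o x * G x = oapp G 0 o.
Proof.
case: o => [x0|] /=; last by rewrite big1 // => x _; rewrite mul0r.
rewrite (bigD1 x0) //= /indic eqxx mul1r big1 ?addr0 // => x /negbTE.
by rewrite (inj_eq (@Some_inj _)) eq_sym => ->; rewrite mul0r.
Qed.

Lemma mulAA_coef c d m :
  mulAA c d m = \sum_x \sum_y indic (mono2_add x y) m * (c x * d y).
Proof.
rewrite ffunE; apply: eq_bigr => x _; rewrite big_mkcond; apply: eq_bigr => y _.
rewrite /indic /mono2_add !addmE.
case: (mono_add x.1 y.1) => [c1|]; case: (mono_add x.2 y.2) => [c2|] /=;
  rewrite ?mul0r ?andbF //.
by case: m => m1 m2; rewrite !(inj_eq (@Some_inj _)) xpair_eqE; case: ifP; rewrite ?mul1r ?mul0r.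
Qed.

Lemma mulAAC c d : mulAA c d = mulAA d c.
Proof.
apply/ffunP=> m; rewrite !mulAA_coef exchange_big /=.
by apply: eq_bigr => x _; apply: eq_bigr => y _; rewrite mono2_addC [c _ * _]mulrC.
Qed.

Lemma mulAA_mulAA_coef c d g m : mulAA (mulAA c d) g m =
  \sum_x \sum_y \sum_z indic (obind (fun w => mono2_add w z) (mono2_add x y)) m *
                       (c x * d y * g z).
Proof.
have expand w z : indic (mono2_add w z) m * (mulAA c d w * g z) =
    \sum_x \sum_y indic (mono2_add x y) w * (indic (mono2_add w z) m * (c x * d y * g z)).
  rewrite mulAA_coef mulr_suml mulr_sumr; apply: eq_bigr => x _.
  rewrite mulr_suml mulr_sumr; apply: eq_bigr => y _.
  by ring.
rewrite mulAA_coef; under eq_bigr do under eq_bigr do rewrite expand.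
under eq_bigr do rewrite exchange_big.
rewrite exchange_big; apply: eq_bigr => x _.
under eq_bigr do rewrite exchange_big.
rewrite exchange_big; apply: eq_bigr => y _.
rewrite exchange_big; apply: eq_bigr => z _.
rewrite (sum_indic _ (fun w => indic (mono2_add w z) m * _)).
by case: (mono2_add x y) => [w|] /=; rewrite ?mul0r.
Qed.

Lemma mulAAA c d g : mulAA c (mulAA d g) = mulAA (mulAA c d) g.
Proof.
apply/ffunP=> m; rewrite mulAAC !mulAA_mulAA_coef.
under eq_bigr do rewrite exchange_big.
rewrite exchange_big; apply: eq_bigr => x _; apply: eq_bigr => y _; apply: eq_bigr => z _.
have -> : obind (fun w => mono2_add w x) (mono2_add y z) = obind (mono2_add x) (mono2_add y z).
  by case: (mono2_add y z) => //= w; rewrite mono2_addC.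
by rewrite [in RHS]mono2_addA -[in RHS]mulrA [c x * _]mulrC.
Qed.

Lemma oneAAE : oneAA k p r = [ffun x => (x == (mono0 r p', mono0 r p'))%:R].
Proof.
have is_mono0 (a : mono) : [forall l, (a l : nat) == idx_zero r l] = (a == mono0 r p').
  by rewrite -mono_ofP mono_of0 (inj_eq (@Some_inj _)) eq_sym.
apply/ffunP=> -[a1 a2]; rewrite !ffunE /= !is_mono0 xpair_eqE.
by case: (a1 == _); case: (a2 == _); rewrite ?mulr1 ?mulr0.
Qed.

Lemma mul1AA c : mulAA (oneAA k p r) c = c.
Proof.
apply/ffunP=> m.
rewrite mulAA_coef (bigD1 (mono0 r p', mono0 r p')) //= [X in _ + X]big1 ?addr0.
  rewrite oneAAE ffunE eqxx; under eq_bigr do rewrite mul1r mono2_add0.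
  rewrite (bigD1 m) //= /indic eqxx mul1r big1 ?addr0 // => y /negbTE.
  by rewrite (inj_eq (@Some_inj _)) => ->; rewrite mul0r.
move=> x /negbTE x_neq0; rewrite big1 // => y _.
by rewrite oneAAE ffunE x_neq0 !mul0r mulr0.
Qed.

Lemma mulAADl c c' d : mulAA (c + c') d = mulAA c d + mulAA c' d.
Proof.
apply/ffunP=> m; rewrite [RHS]ffunE !mulAA_coef -big_split; apply: eq_bigr => x _.
by rewrite -big_split; apply: eq_bigr => y _; rewrite ffunE mulrDl mulrDr.
Qed.

Lemma oneAA_neq0 : oneAA k p r != 0.
Proof.
apply/eqP=> /ffunP /(_ (mono0 r p', mono0 r p')).
by rewrite oneAAE !ffunE eqxx; apply/eqP; rewrite oner_eq0.
Qed.

Definition Ae : Type := AA.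
HB.instance Definition _ := GRing.Zmodule.copy Ae AA.
HB.instance Definition _ := GRing.Zmodule_isComNzRing.Build Ae
  mulAAA mulAAC mul1AA mulAADl oneAA_neq0.

Lemma mulAeE (c d : Ae) : c * d = mulAA c d. Proof. by []. Qed.
Lemma oneAeE : (1 : Ae) = oneAA k p r. Proof. by []. Qed.

Lemma mulAA0 c : mulAA c 0 = 0.
Proof. exact: (@mulr0 Ae). Qed.

Lemma powAAE (c : Ae) n : powAA c n = c ^+ n.
Proof. by elim: n => [|n IHn] //=; rewrite exprS IHn. Qed.

Lemma fscM (a : k) (c d : Ae) : fsc a (c * d) = (fsc a c : Ae) * d.
Proof.
apply/ffunP=> m; rewrite !mulAeE !ffunE mulr_sumr; apply: eq_bigr => x _.
by rewrite mulr_sumr; apply: eq_bigr => y _; rewrite ffunE mulrA.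
Qed.

Lemma fsc0 (a : k) : fsc a (0 : AA) = 0.
Proof. by apply/ffunP=> m; rewrite !ffunE mulr0. Qed.

Lemma fsc_sign n (c : Ae) : (-1) ^+ n * c = fsc ((-1) ^+ n) c.
Proof.
rewrite -signr_odd -[(-1 : k) ^+ n]signr_odd.
case: (odd n); rewrite ?expr1 ?expr0 ?mulN1r ?mul1r.
  by apply/ffunP=> m; rewrite !ffunE mulN1r.
by apply/ffunP=> m; rewrite !ffunE mul1r.
Qed.

Definition deltaAA x : Ae := [ffun y => (y == x)%:R].
Definition xtens (e f : idx r) : Ae := tens (xpow k p e) (xpow k p f).

Lemma xpowE (e : idx r) : xpow k p e = oapp (@monoA k p r) 0 (mono_of p' e).
Proof.
apply/ffunP=> m; rewrite ffunE -mono_ofP.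
case: (mono_of p' e) => [a|] /=; rewrite ffunE // (inj_eq (@Some_inj _)) eq_sym.
by case: (_ == _).
Qed.

Lemma xtensE e f : xtens e f =
  if (mono_of p' e, mono_of p' f) is (Some a, Some b) then deltaAA (a, b) else 0.
Proof.
rewrite /xtens !xpowE.
case: (mono_of p' e) => [a|]; case: (mono_of p' f) => [b|];
  apply/ffunP => -[x y]; rewrite !ffunE /= ?mulr0 ?mul0r // xpair_eqE.
by case: (x == a); case: (y == b); rewrite ?mulr1 ?mulr0.
Qed.

Lemma deltaAA_mul_coef x (c : Ae) m : (deltaAA x * c) m = \sum_y indic (mono2_add x y) m * c y.
Proof.
rewrite mulAeE mulAA_coef (bigD1 x) //= [X in _ + X]big1 ?addr0.
  by apply: eq_bigr => y _; rewrite ffunE eqxx mul1r.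
by move=> z /negbTE z_neq_x; apply: big1 => y _; rewrite ffunE z_neq_x mul0r mulr0.
Qed.

Lemma deltaAA_mul x y : deltaAA x * deltaAA y = oapp deltaAA 0 (mono2_add x y).
Proof.
apply/ffunP=> m; rewrite deltaAA_mul_coef (bigD1 y) //= [X in _ + X]big1 ?addr0.
  rewrite ffunE eqxx mulr1 /indic; case: (mono2_add x y) => [z|] /=; rewrite ffunE //.
  by rewrite (inj_eq (@Some_inj _)) eq_sym.
by move=> z /negbTE z_neq_y; rewrite ffunE z_neq_y mulr0.
Qed.

Lemma xtens_mul e f e' f' :
  xtens e f * xtens e' f' = xtens (fun l => e l + e' l)%N (fun l => f l + f' l)%N.
Proof.
have None_addr (g g' : idx r) :
    mono_of p' g = None -> mono_of p' (fun l => g l + g' l)%N = None.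
  by apply: mono_of_None => l; apply: leq_addr.
have None_addl (g g' : idx r) :
    mono_of p' g' = None -> mono_of p' (fun l => g l + g' l)%N = None.
  by apply: mono_of_None => l; apply: leq_addl.
rewrite !xtensE.
case Ee: (mono_of p' e) => [a|]; last by rewrite mul0r None_addr.
case Ef: (mono_of p' f) => [b|]; last first.
  by rewrite mul0r (None_addr f f'); case: (mono_of p' (fun l => e l + e' l)%N).
case Ee': (mono_of p' e') => [a'|]; last by rewrite mulr0 None_addl.
case Ef': (mono_of p' f') => [b'|]; last first.
  by rewrite mulr0 (None_addl f f'); case: (mono_of p' (fun l => e l + e' l)%N).
rewrite deltaAA_mul /mono2_add /mono_add /=.
rewrite (mono_of_Some Ee) (mono_of_Some Ef) (mono_of_Some Ee') (mono_of_Some Ef').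
by case: mono_of => [c1|]; case: mono_of => [c2|].
Qed.

Lemma xtens_exp e f n :
  xtens e f ^+ n = xtens (fun l => n * e l)%N (fun l => n * f l)%N.
Proof.
elim: n => [|n IHn].
  by rewrite expr0 oneAeE; congr tens; congr xpow; apply: functional_extensionality.
by rewrite exprS IHn xtens_mul; congr xtens; apply: functional_extensionality => l; rewrite mulSn.
Qed.

Definition ye (i : 'I_r) : Ae := xtens (ei i 1) (idx_zero r).
Definition ze (i : 'I_r) : Ae := xtens (idx_zero r) (ei i 1).

Definition lieAct (c : AA) : Ae :=
  \sum_x fsc (c x) ((DeltaM k x.1 : Ae) * tens (oneA k p r) (monoA k x.2)).

Lemma actXA_lieAct c (v : Ae) : actXA c v = lieAct c * v.
Proof.
rewrite mulr_suml; apply: eq_bigr => x _.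
by rewrite -fscM -!mulAeE -mulrA [v * _]mulrC mulrA.
Qed.

Lemma lieAct_is_zmod_morphism : zmod_morphism lieAct.
Proof.
move=> c d; rewrite -sumrB; apply: eq_bigr => x _.
by apply/ffunP=> m; rewrite !ffunE mulrBl.
Qed.
HB.instance Definition _ := GRing.isZmodMorphism.Build AA Ae lieAct lieAct_is_zmod_morphism.

Lemma lieAct_fsc (a : k) c : lieAct (fsc a c) = fsc a (lieAct c).
Proof.
apply/ffunP=> m; rewrite ffunE !sum_ffunE mulr_sumr; apply: eq_bigr => x _.
by rewrite !ffunE mulrA.
Qed.

Lemma lieAct_deltaAA x :
  lieAct (deltaAA x) = (DeltaM k x.1 : Ae) * tens (oneA k p r) (monoA k x.2).
Proof.
rewrite /lieAct (bigD1 x) //= big1 ?addr0.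
  by apply/ffunP=> m; rewrite !ffunE eqxx mul1r.
by move=> y /negbTE y_neq_x; apply/ffunP=> m; rewrite !ffunE y_neq_x mul0r.
Qed.

Lemma ye_exp i a : ye i ^+ a = xtens (ei i a) (idx_zero r).
Proof.
rewrite xtens_exp; congr xtens; apply: functional_extensionality => l.
  by rewrite /ei; case: (l == i); rewrite ?muln1 ?muln0.
by rewrite muln0.
Qed.

Lemma ze_exp i b : ze i ^+ b = xtens (idx_zero r) (ei i b).
Proof.
rewrite xtens_exp; congr xtens; apply: functional_extensionality => l.
  by rewrite muln0.
by rewrite /ei; case: (l == i); rewrite ?muln1 ?muln0.
Qed.

Lemma mono_of_ei i a : (a < p)%N -> {a' : mono | mono_of p' (ei i a) = Some a'}.
Proof.
move=> a_lt_p; case E: (mono_of p' (ei i a)) => [a'|]; first by exists a'.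
suff: mono_of p' (ei i a) != None by rewrite E.
by rewrite /mono_of; case: ifP => // /forallP[] l; rewrite /ei; case: (l == i).
Qed.

Lemma DeltaM_prod (a : mono) : (DeltaM k a : Ae) = \prod_l (ye l + ze l) ^+ a l.
Proof.
by apply: (big_rec2 (fun (c : AA) (d : Ae) => c = d)) => // l c d _ ->; rewrite powAAE.
Qed.

Lemma DeltaM_ei i a (a' : mono) :
  mono_of p' (ei i a) = Some a' -> (DeltaM k a' : Ae) = (ye i + ze i) ^+ a.
Proof.
move=> /mono_of_Some ei_a'; have a'E l : (a' l : nat) = ei i a l by rewrite ei_a'.
rewrite DeltaM_prod (bigD1 i) //= big1 => [|l l_neq_i].
  by rewrite a'E ei_id mulr1.
by rewrite a'E /ei (negbTE l_neq_i) expr0.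
Qed.

Lemma lieAct_ye_ze i a b : (a < p)%N -> (b < p)%N ->
  lieAct (ye i ^+ a * ze i ^+ b) = (ye i + ze i) ^+ a * ze i ^+ b.
Proof.
move=> a_lt_p b_lt_p; have [ma Ema] := mono_of_ei i a_lt_p.
have [mb Emb] := mono_of_ei i b_lt_p.
have -> : ye i ^+ a * ze i ^+ b = deltaAA (ma, mb).
  rewrite ye_exp ze_exp !xtensE Ema Emb mono_of0 deltaAA_mul /mono2_add /=.
  by rewrite mono_addC !mono_add0.
by rewrite lieAct_deltaAA (DeltaM_ei Ema) ze_exp /xtens [xpow k p (ei i b)]xpowE Emb.
Qed.

Lemma lieAct_yz_exp i n : (n < p)%N -> lieAct ((ye i - ze i) ^+ n) = ye i ^+ n.
Proof.
move=> n_lt_p; rewrite -[in RHS](addrK (ze i) (ye i)) !exprBn raddf_sum.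
apply: eq_bigr => j _; rewrite raddfMn /= -!mulrA !fsc_sign lieAct_fsc.
rewrite lieAct_ye_ze // ?(leq_ltn_trans (leq_subr _ _) n_lt_p) //.
by apply: leq_ltn_trans n_lt_p; rewrite -ltnS.
Qed.

Lemma actXA_yz_exp i n (v : AA) : (n < p)%N ->
  actXA (powAA (yz k p i) n) v = mulAA (tens (xvar k p i n) (oneA k p r)) v.
Proof.
move=> n_lt_p; rewrite (actXA_lieAct _ (v : Ae)) (powAAE (yz k p i : Ae)).
by rewrite (lieAct_yz_exp i n_lt_p) ye_exp.
Qed.

Lemma deltaAA_mul_coef_Some x y m (c : Ae) :
  mono2_add x y = Some m -> (deltaAA x * c) m = c y.
Proof.
move=> xy_m; rewrite deltaAA_mul_coef (bigD1 y) //= /indic xy_m eqxx mul1r big1 ?addr0 //.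
move=> y' /negbTE y'_neq_y; case: eqP => [xy'_m|_]; last by rewrite mul0r.
by rewrite (mono2_add_inj xy'_m xy_m) eqxx in y'_neq_y.
Qed.

Lemma deltaAA_mul_coef_None x m (c : Ae) :
  (forall y, mono2_add x y <> Some m) -> (deltaAA x * c) m = 0.
Proof.
move=> xy_neq_m; rewrite deltaAA_mul_coef big1 // => y _.
by rewrite /indic; case: eqP => [/xy_neq_m|_]; rewrite ?mul0r.
Qed.

Definition mono_sub (a : mono) i (d : nat) : mono :=
  [ffun l => if l == i then inord (a i - d) else a l].

Lemma mulAA_xvar_coef i (d : nat) (v : AA) (a b : mono) : (d < p)%N ->
  mulAA (tens (xvar k p i d) (oneA k p r)) v (a, b) =
  if (d <= a i)%N then v (mono_sub a i d, b) else 0.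
Proof.
move=> d_lt_p; have [md Emd] := mono_of_ei i d_lt_p.
have /mono_of_Some ei_md := Emd; have mdE l : (md l : nat) = ei i d l by rewrite ei_md.
have -> : mulAA (tens (xvar k p i d) (oneA k p r)) v = deltaAA (md, mono0 r p') * (v : Ae).
  by rewrite -[tens _ _]/(xtens (ei i d) (idx_zero r)) xtensE Emd mono_of0.
case: ifP => d_le_ai.
  apply: deltaAA_mul_coef_Some; rewrite /mono2_add /= mono_add0.
  suff -> : mono_add md (mono_sub a i d) = Some a by [].
  rewrite -mono_of_val; congr mono_of; apply: functional_extensionality => l.
  rewrite ffunE mdE /ei; case: eqP => [->|_] //.
  by rewrite inordK ?subnKC // (leq_ltn_trans (leq_subr _ _)).
apply: deltaAA_mul_coef_None => y; rewrite /mono2_add /=.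
case E1: (mono_add md y.1) => [c|] //=; rewrite mono_add0 => -[ca _].
by move: (mono_add_val E1 i) d_le_ai; rewrite ca mdE /ei eqxx => ->; rewrite leq_addr.
Qed.

End EnvelopingRing.

Lemma dQ0 (k : fieldType) (p r : nat) j : dQ (fun _ : idx r => 0 : Aelt k p r) j = 0.
Proof.
have mulA0 (f : Aelt k p r) : Defs.mulA f 0 = 0.
  by apply/ffunP=> m; rewrite !ffunE big1 // => a _; rewrite big1 // => b _; rewrite ffunE mulr0.
have mul0A (f : Aelt k p r) : Defs.mulA 0 f = 0.
  by apply/ffunP=> m; rewrite !ffunE big1 // => a _; rewrite big1 // => b _; rewrite ffunE mul0r.
rewrite /dQ big1 // => i _; apply/ffunP=> m; rewrite !ffunE sum_ffunE big1 ?mulr0 // => x _.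
by rewrite mulA0 mul0A !ffunE mulr0.
Qed.

Section ComparisonMaps.
Variables (k : fieldType) (r p' : nat).
Local Notation p := p'.+2.
Local Notation mono := {ffun 'I_r -> 'I_p}.
Local Notation AA := (AAelt k p r).
Implicit Types (j : idx r) (i l : 'I_r) (a b : mono) (v w : AA).

Lemma dexp_gt0 n : (0 < dexp p n)%N.
Proof. by rewrite /dexp; case: (odd n). Qed.

Lemma dexp_lt n : (dexp p n < p)%N.
Proof. by rewrite /dexp; case: (odd n). Qed.

Lemma dexp1 : dexp p 1 = 1%N. Proof. by []. Qed.
Lemma dexp2 : dexp p 2 = p'.+1. Proof. by []. Qed.

Lemma epsAA1E w b : epsAA1 w b = w (mono0 r p'.+1, b).
Proof.
rewrite ffunE (big_pred1 (mono0 r p'.+1)) // => a /=.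
by rewrite -mono_ofP mono_of0 (inj_eq (@Some_inj _)) eq_sym.
Qed.

Lemma PhiCochain_hatP i n (v : idx r -> AA) :
  PhiCochain n (hatP k i n) v = epsAA1 (v (ei i n)).
Proof.
pose jn : {ffun 'I_r -> 'I_n.+1} := [ffun l => inord (ei i n l)].
have jnE : (fun l => (jn l : nat)) = ei i n.
  apply: functional_extensionality => l; rewrite ffunE inordK // ltnS /ei.
  by case: (l == i).
rewrite /PhiCochain (bigD1 jn) /=; last by rewrite jnE deg_ei.
rewrite big1 ?addr0 => [|jj /andP[_ jj_neq_jn]]; rewrite /hatP.
  by rewrite jnE; case: idx_eqbP => // _; apply/ffunP=> b; rewrite ffunE mul1r.
case: idx_eqbP => [jjE|_]; last by apply/ffunP=> b; rewrite !ffunE mul0r.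
case/eqP: jj_neq_jn; apply/ffunP=> l; apply/val_inj.
by rewrite /= (congr1 (fun f => f l) jjE) (congr1 (fun f => f l) jnE).
Qed.

Definition comparison_id : idx r -> idx r -> AA :=
  fun j j' => if idx_eqb j' j then oneAA k p r else 0.

Lemma comparison_comparison_id : comparison comparison_id.
Proof.
split=> [j j' deg_neq | | j _ j'].
- by rewrite /comparison_id; case: idx_eqbP => // j'_j; rewrite j'_j in deg_neq.
- rewrite /comparison_id; case: idx_eqbP => // _; apply/ffunP=> b.
  by rewrite epsAA1E !ffunE -mono_ofP mono_of0 eqxx mul1r.
rewrite /dPA [RHS]big_mkcond /=; apply: eq_bigr => i _.
rewrite /comparison_id; case: (idx_eqbP (incr j' i) j) => [<-|incr_neq].
  rewrite /incr eqxx /= decr_incr.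
  by case: idx_eqbP => // _; rewrite actXA_yz_exp ?dexp_lt.
rewrite mulAA0 fsc0; case: ifP => // ji_gt0.
case: idx_eqbP => [j'E|_]; first by rewrite j'E incr_decr in incr_neq.
by rewrite actXA_yz_exp ?dexp_lt // mulAA0 fsc0.
Qed.

Definition xmono i (c : 'I_p) : mono := [ffun l => if l == i then c else ord0].

Lemma sum_xmono (P : pred 'I_r) (n : 'I_r -> nat) (H : 'I_r -> k) i (c : 'I_p) :
  \sum_(l | P l) (if (dexp p (n l) <= xmono i c l)%N then H l else 0) =
  if P i && (dexp p (n i) <= c)%N then H i else 0.
Proof.
rewrite big_mkcond (bigD1 i) //= big1 ?addr0 => [|l l_neq_i].
  by rewrite ffunE eqxx; case: (P i).
by rewrite ffunE (negbTE l_neq_i) leqn0 eqn0Ngt dexp_gt0; case: (P l).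
Qed.

Lemma mono_sub_xmono i (c : 'I_p) (d : nat) : d = c -> mono_sub (xmono i c) i d = mono0 r p'.+1.
Proof.
move=> ->; apply/ffunP=> l; apply/val_inj; rewrite !ffunE eqxx.
by case: (l == i); rewrite //= subnn inordK.
Qed.

Section Comparison.
Variable F : idx r -> idx r -> AA.
Hypothesis F_comparison : comparison F.

(* Both differentials act through multiplication by powers of [x_i (x) 1]. *)
Lemma comparison_coef j j' a b : (0 < deg j)%N ->
  \sum_i (if (dexp p (incr j' i i) <= a i)%N
          then ksgn k (incr j' i) i * F j (incr j' i) (mono_sub a i (dexp p (incr j' i i)), b)
          else 0) =
  \sum_(i | (0 < j i)%N) (if (dexp p (j i) <= a i)%N
          then ksgn k j i * F (decr j i) j' (mono_sub a i (dexp p (j i)), b)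
          else 0).
Proof.
case: F_comparison => _ _ chain deg_gt0.
transitivity (dPA (F j) j' (a, b)).
  rewrite /dPA sum_ffunE; apply: eq_bigr => i _.
  by rewrite ffunE mulAA_xvar_coef ?dexp_lt //; case: ifP; rewrite ?mulr0.
rewrite chain // sum_ffunE; apply: eq_bigr => i _.
by rewrite ffunE actXA_yz_exp ?dexp_lt // mulAA_xvar_coef ?dexp_lt //; case: ifP; rewrite ?mulr0.
Qed.

Let one_lt_p : (1 < p)%N := ltn0Sn p'.

Lemma epsAA1_comparison_deg1 j i : deg j = 1%N ->
  epsAA1 (F j (ei i 1)) = if (0 < j i)%N then oneA k p r else 0.
Proof.
move=> deg_j; apply/ffunP=> b; rewrite epsAA1E.
move: (comparison_coef (j := j) (idx_zero r) (xmono i (Ordinal one_lt_p)) b).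
rewrite deg_j => /(_ isT); rewrite !sum_xmono incr0 ei_id ksgn_ei mul1r.
rewrite dexp1 mono_sub_xmono //= => ->.
have [ji_gt0|_] := boolP (0 < j i)%N; last by rewrite ffunE.
rewrite (deg1_idx_eq deg_j ji_gt0) ei_id ksgn_ei decr_ei ei0 mul1r mono_sub_xmono //=.
by case: F_comparison => _ eps_F0 _; rewrite -epsAA1E eps_F0.
Qed.

Lemma comparison_deg1_vanish j i b : deg j = 1%N -> j i = 0%N ->
  F j (ei i 1) (mono_sub (xmono i ord_max) i 1, b) = 0.
Proof.
move=> deg_j ji0; move: (comparison_coef (j := j) (idx_zero r) (xmono i ord_max) b).
by rewrite deg_j => /(_ isT); rewrite !sum_xmono incr0 ei_id ksgn_ei mul1r ji0.
Qed.

Lemma epsAA1_comparison_deg2 j i : deg j = 2%N ->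
  epsAA1 (F j (ei i 2)) = if j i == 2%N then oneA k p r else 0.
Proof.
move=> deg_j; apply/ffunP=> b; rewrite epsAA1E.
move: (comparison_coef (j := j) (ei i 1) (xmono i ord_max) b).
rewrite deg_j => /(_ isT); rewrite !sum_xmono incr_ei ei_id ksgn_ei mul1r.
rewrite dexp2 leqnn mono_sub_xmono //= => ->.
have dexp_le n : (dexp p n <= p'.+1)%N := dexp_lt n; rewrite dexp_le andbT.
have := leq_idx_deg j i; rewrite deg_j.
case ji: (j i) => [|[|[|n]]] // _.
- by rewrite ffunE.
- rewrite /= dexp1 comparison_deg1_vanish ?mulr0 ?ffunE //; last by rewrite /decr eqxx ji.
  by apply: succn_inj; rewrite -deg_decr ?deg_j ?ji.
have -> : j = ei i 2 by rewrite -deg_j; apply: idx_eq_ei; rewrite ji deg_j.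
rewrite /= ksgn_ei decr_ei dexp2 mono_sub_xmono // mul1r -epsAA1E.
by rewrite epsAA1_comparison_deg1 ?deg_ei // ei_id.
Qed.

End Comparison.
End ComparisonMaps.

Theorem theorem4p2 (k : fieldType) (p r : nat) :
  prime p -> p \in [pchar k] ->
  (exists F : idx r -> idx r -> AAelt k p r, comparison F) /\
  (forall F : idx r -> idx r -> AAelt k p r, comparison F ->
     forall i : 'I_r,
       cohomologous 1 (PhiPull F 1 (hatP k i 1)) (hatQ k p i 1) /\
       cohomologous 2 (PhiPull F 2 (hatP k i 2)) (hatQ k p i 2)).
Proof.
case: p => [|[|p']] // _ _.
split; first by eexists; exact: comparison_comparison_id.
move=> F F_comparison i; split; exists (fun _ => 0) => j deg_j;
  rewrite /PhiPull PhiCochain_hatP dQ0 addr0 /hatQ -[in ei i _]deg_j idx_eqb_ei_deg deg_j;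
  have := leq_idx_deg j i; rewrite deg_j.
- by rewrite (epsAA1_comparison_deg1 F_comparison); case: (j i) => [|[|]].
- by rewrite (epsAA1_comparison_deg2 F_comparison).
Qed.
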